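(* Consider $n$ robots initially placed at distinct nodes of the infinite grid $\mathbb{Z}\times\mathbb{Z}$ together with a finite set $M$ of meeting nodes, in the model described in the context. Suppose the initial configuration $C(0)$ belongs to $\mathcal{I}_3^{b3}\cup\mathcal{I}_4^{b3}$. Then the gathering over Weber nodes problem cannot be solved from $C(0)$: there is no deterministic distributed algorithm guaranteeing that, from $C(0)$, all robots eventually gather (and remain) at a single node that is a Weber node of $C(0)$.
   Context: Model: robots are anonymous, homogeneous (all run the same deterministic algorithm), oblivious, silent, with no agreement on a global coordinate system or on chirality, and with unlimited visibility. They operate in Look-Compute-Move cycles under a fair asynchronous scheduler; in a cycle a robot either stays or moves to an adjacent grid node, moves being instantaneous. Robots have global strong multiplicity detection (they see the exact number of robots on every node) and see the meeting nodes. Let $d$ be the grid (shortest path) distance, $\lambda_t(v)$ the number of robots at node $v$ at time $t$, $c_t(m)=\sum_v d(v,m)\lambda_t(v)$, and $W(t)$ the set of meeting nodes $m\in M$ minimizing $c_t(m)$ (the Weber nodes). A symmetry of $M$ is a grid automorphism (reflection or rotation) mapping $M$ to itself; a symmetry of the configuration $C(t)$ is a grid automorphism $\phi$ preserving meeting nodes and satisfying $\lambda_t(\phi(v))=\lambda_t(v)$ for all $v$. Class $\mathcal{I}_3^{b3}$: $M$ admits a unique line of (reflection) symmetry $l$, $|W(t)|\ge 2$, $C(t)$ is symmetric with respect to $l$, and there is no Weber node and no robot on $l$ (there may be meeting nodes on $l$). Class $\mathcal{I}_4^{b3}$: $M$ admits rotational symmetry with center $c$, $|W(t)|\ge 2$,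 $C(t)$ is symmetric with respect to that rotational symmetry, and there is neither a meeting node nor a robot on $c$. *)

From mathcomp Require Import all_boot all_order all_algebra.
Set Implicit Arguments. Unset Strict Implicit. Unset Printing Implicit Defensive.
Import Order.TTheory GRing.Theory Num.Theory.
Local Open Scope ring_scope.

Definition node := (int * int)%type.

Definition nadd (u v : node) : node := (u.1 + v.1, u.2 + v.2).

Definition gdist (u v : node) : nat := (`|u.1 - v.1|%N + `|u.2 - v.2|%N)%N.

(* linear grid automorphisms (the 8 elements of D4):
   optional swap of coordinates, then optional sign changes *)
Definition orient := (bool * bool * bool)%type.
Definition lin (o : orient) (v : node) : node :=
  let: (s, nx, ny) := o in
  let: (x, y) := if s then (v.2, v.1) else (v.1, v.2) in
  ((if nx then - x else x), (if ny then - y else y)).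

Record gaut := GAut { g_lin : orient; g_tr : node }.
Definition gapp (f : gaut) (v : node) : node := nadd (lin (g_lin f) v) (g_tr f).

Definition det_neg (o : orient) : bool := let: (s, nx, ny) := o in s (+) nx (+) ny.

(* a reflection: orientation reversing and involutive (excludes glide reflections) *)
Definition is_reflection (f : gaut) : Prop :=
  det_neg (g_lin f) /\ forall v, gapp f (gapp f v) = v.
Definition is_rotation (f : gaut) : Prop :=
  ~~ det_neg (g_lin f) /\ g_lin f <> (false, false, false).

Section Config.
Variable n : nat.
Implicit Types (pos : 'I_n -> node) (M : seq node).

Definition lam pos (v : node) : nat := #|[pred i : 'I_n | pos i == v]|.

Definition occupied pos : seq node := undup [seq pos i | i <- enum 'I_n].

Definition cost pos (m : node) : nat :=
  \sum_(v <- occupied pos) (gdist v m * lam pos v)%N.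

Definition weber M pos (w : node) : bool :=
  (w \in M) && all (fun m => cost pos w <= cost pos m)%N M.

Definition weber_ge2 M pos : Prop :=
  exists w1 w2, [/\ w1 != w2, weber M pos w1 & weber M pos w2].

Definition sym_M M (f : gaut) : Prop := forall v, (gapp f v \in M) = (v \in M).

Definition sym_conf M pos (f : gaut) : Prop :=
  sym_M M f /\ forall v, lam pos (gapp f v) = lam pos v.

(* class I_3^{b3}; the grid nodes on the line l are the nodes fixed by the reflection *)
Definition class_I3b3 M pos : Prop :=
  exists f, is_reflection f /\ sym_M M f /\
    (forall f', is_reflection f' -> sym_M M f' -> forall v, gapp f' v = gapp f v) /\
    weber_ge2 M pos /\ sym_conf M pos f /\
    (forall v, gapp f v = v -> ~~ weber M pos v /\ lam pos v = 0%N).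

(* class I_4^{b3}; the center c is a grid node iff it is a node fixed by the rotation *)
Definition class_I4b3 M pos : Prop :=
  exists f, [/\ is_rotation f, sym_M M f, weber_ge2 M pos, sym_conf M pos f &
    (forall v, gapp f v = v -> v \notin M /\ lam pos v = 0%N)].

End Config.

(* possible moves, in the robot's local coordinates *)
Inductive dir := Stay | Up | Down | Left | Right.
Definition dvec (d : dir) : node :=
  match d with
  | Stay => (0, 0) | Up => (0, 1) | Down => (0, -1)
  | Left => (-1, 0) | Right => (1, 0)
  end.

(* A deterministic, oblivious algorithm common to all (anonymous) robots:
   from a snapshot expressed in the robot's local coordinate system
   (origin = its own position), i.e. the multiplicity of every node and
   which nodes are meeting nodes, it computes a move. *)
Definition algorithm := (node -> nat) -> (node -> bool) -> dir.

Section Exec.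
Variables (n : nat) (algo : algorithm) (M : seq node).
(* local orientation of each robot (no common axes nor chirality) *)
Variable frame : 'I_n -> orient.

Record state := St { st_pos : 'I_n -> node; st_pending : 'I_n -> option node }.

Definition snapshot_target (pos : 'I_n -> node) (i : 'I_n) : node :=
  let o := frame i in
  let p := pos i in
  nadd p (lin o (dvec (algo (fun v => lam pos (nadd p (lin o v)))
                            (fun v => nadd p (lin o v) \in M)))).

(* ASYNC activation of robot i: if it has no pending move it performs
   Look+Compute (storing its destination); otherwise it performs its
   (instantaneous) Move to the destination computed at its last Look. *)
Definition step (st : state) (i : 'I_n) : state :=
  match st_pending st i with
  | Some q => St (fun j => if j == i then q else st_pos st j)
                 (fun j => if j == i then None else st_pending st j)
  | None => St (st_pos st)
                 (fun j => if j == i then Some (snapshot_target (st_pos st) i)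
                           else st_pending st j)
  end.

Fixpoint exec (sched : nat -> 'I_n) (pos0 : 'I_n -> node) (t : nat) : state :=
  match t with
  | 0 => St pos0 (fun _ => None)
  | t'.+1 => step (exec sched pos0 t') (sched t')
  end.

End Exec.

Definition fair n (sched : nat -> 'I_n) : Prop :=
  forall (i : 'I_n) (t : nat), exists t', (t <= t')%N /\ sched t' = i.

Definition solves_gathering n (algo : algorithm) (M : seq node) (pos0 : 'I_n -> node) : Prop :=
  forall (frame : 'I_n -> orient) (sched : nat -> 'I_n), fair sched ->
    exists w, weber M pos0 w /\
      exists T, forall t, (T <= t)%N -> forall i,
        st_pos (exec algo M frame sched pos0 t) i = w.

(* An algorithm that gathers from a configuration symmetric under an
   involutive grid automorphism g must gather on a node fixed by g.  The
   robots come in pairs (i, s i) with pos (s i) = g (pos i); give the partner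
   of each robot the local frame obtained by applying g to its own frame, and
   activate the robots round-robin, so that they first all Look and then all
   Move.  Each robot then sees the mirror image of its partner's snapshot, so
   the algorithm sends partners to mirror nodes and every round preserves the
   symmetry.  In I_3^{b3} the nodes fixed by the reflection are not Weber
   nodes; in I_4^{b3} the half-turn (the rotation itself or its square) fixes
   only the center, which is not a meeting node. *)
From mathcomp Require Import all_boot all_order all_algebra zify.
From Stdlib Require Import FunctionalExtensionality.
Set Implicit Arguments. Unset Strict Implicit.

Lemma lin_nadd o u v : lin o (nadd u v) = nadd (lin o u) (lin o v).
Proof.
case: o => [[s nx] ny]; case: u => a b; case: v => c d.
by case: s; case: nx; case: ny; rewrite /lin /nadd /=; congr (_,_); lia.
Qed.

Lemma lin_inj o : injective (lin o).
Proof.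
case: o => [[s nx] ny] [a b] [c d].
by case: s; case: nx; case: ny; rewrite /lin /=; case=> h1 h2; congr (_,_); lia.
Qed.

Lemma gapp_inj g : injective (gapp g).
Proof.
move=> u v; rewrite /gapp /nadd => e; apply: (@lin_inj (g_lin g)).
move: e; case: (lin _ u) => a b; case: (lin _ v) => c d.
by case: (g_tr g) => p q /= [e1 e2]; congr (_,_); lia.
Qed.

Lemma gapp_nadd g p u : gapp g (nadd p u) = nadd (gapp g p) (lin (g_lin g) u).
Proof.
rewrite /gapp lin_nadd; case: (lin _ p) => a b; case: (lin _ u) => c d.
by case: (g_tr g) => e f; rewrite /nadd /=; congr (_,_); lia.
Qed.

Lemma lin_involutive g : involutive (gapp g) -> involutive (lin (g_lin g)).
Proof.
move=> ginv v; have := ginv (0%R, 0%R); have := ginv v; rewrite /gapp !lin_nadd.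
have lin0 : lin (g_lin g) (0%R, 0%R) = (0%R, 0%R).
  by case: (g_lin g) => [[s nx] ny]; case: s; case: nx; case: ny.
rewrite !lin0.
case: (lin _ (lin _ v)) => a b; case: (lin _ (g_tr g)) => c d.
by case: (g_tr g) => p q; case: v => x y; rewrite /nadd /= => [[e1 e2] [e3 e4]]; congr (_,_); lia.
Qed.

Lemma sym_conf_iter n M (pos : 'I_n -> node) f g k :
  gapp g =1 iter k (gapp f) -> sym_conf M pos f -> sym_conf M pos g.
Proof.
move=> gfk [symM symL]; split=> v; rewrite gfk {gfk}.
  by elim: k => //= k IH; rewrite symM.
by elim: k => //= k IH; rewrite symL.
Qed.

Lemma rotation_half_turn f : is_rotation f ->
  exists g k, [/\ involutive (gapp g), gapp g =1 iter k (gapp f)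
                & forall v, gapp g v = v -> gapp f v = v].
Proof.
case: f => [[[s nx] ny] [p q]]; rewrite /is_rotation /=.
case: s; case: nx; case: ny => -[] //= _ nid; try by case: nid.
(* the square of a quarter turn [v |-> L v + t] is the half-turn [v |-> - v + (L t + t)] *)
- exists (GAut (false, true, true) (nadd (lin (true, true, false) (p, q)) (p, q))), 2.
  by split=> -[a b]; rewrite /gapp /lin /nadd /=; try case=> ? ?; congr (_,_); lia.
- exists (GAut (false, true, true) (nadd (lin (true, false, true) (p, q)) (p, q))), 2.
  by split=> -[a b]; rewrite /gapp /lin /nadd /=; try case=> ? ?; congr (_,_); lia.
- exists (GAut (false, true, true) (p, q)), 1.
  by split=> // -[a b]; rewrite /gapp /lin /nadd /=; congr (_,_); lia.
Qed.

Section RoundRobin.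
Variables (n : nat) (algo : algorithm) (M : seq node) (frame : 'I_n -> orient).
Local Notation step := (step algo M frame).
Local Notation target := (snapshot_target algo M frame).

Lemma foldl_step_look st (s : seq 'I_n) :
  uniq s -> {in s, forall i, st_pending st i = None} ->
  foldl step st s =
  St (st_pos st) (fun j => if j \in s then Some (target (st_pos st) j) else st_pending st j).
Proof.
elim: s st => [|i s IH] st /=.
  by case: st => pos pend _ _; congr St; apply: functional_extensionality.
case/andP=> i_s s_uniq idle; rewrite /step idle ?mem_head // IH //=.
  congr St; apply: functional_extensionality => j; rewrite in_cons.
  by case: eqP => [->|]; rewrite ?(negbTE i_s) ?orbF.
move=> j js; have /negbTE -> : j != i by apply: contraNneq i_s => <-.
by apply: idle; rewrite in_cons js orbT.
Qed.

Lemma foldl_step_move st (s : seq 'I_n) (q : 'I_n -> node) :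
  uniq s -> {in s, forall i, st_pending st i = Some (q i)} ->
  foldl step st s =
  St (fun j => if j \in s then q j else st_pos st j)
     (fun j => if j \in s then None else st_pending st j).
Proof.
elim: s st => [|i s IH] st /=.
  by case: st => pos pend _ _; congr St; apply: functional_extensionality.
case/andP=> i_s s_uniq busy; rewrite /step busy ?mem_head // IH //=.
  by congr St; apply: functional_extensionality => j; rewrite in_cons;
    case: eqP => [->|]; rewrite ?(negbTE i_s) ?orbF.
move=> j js; have /negbTE -> : j != i by apply: contraNneq i_s => <-.
by apply: busy; rewrite in_cons js orbT.
Qed.

Lemma exec_addn sched pos0 m k :
  exec algo M frame sched pos0 (m + k) =
  foldl step (exec algo M frame sched pos0 m) [seq sched (m + i) | i <- iota 0 k].
Proof.
elim: k => [|k IH]; first by rewrite addn0.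
by rewrite -addn1 iotaD map_cat foldl_cat -IH addnA addn1.
Qed.

Hypothesis n_gt0 : (0 < n)%N.

Definition round_robin (t : nat) : 'I_n := Ordinal (ltn_pmod t n_gt0).

Lemma round_robin_fair : fair round_robin.
Proof.
move=> i t; exists (t * n + i)%N; split; first by nia.
by apply: val_inj; rewrite /= modnMDl modn_small.
Qed.

Lemma round_robin_cycle m : [seq round_robin (m * n + i) | i <- iota 0 n] = enum 'I_n.
Proof.
apply: (inj_map val_inj); rewrite val_enum_ord -map_comp.
rewrite -[RHS]map_id; apply/eq_in_map => i; rewrite mem_iota => /andP [_ lt_in] /=.
by rewrite modnMDl modn_small.
Qed.

Lemma exec_round_robin pos0 r :
  exec algo M frame round_robin pos0 (r.*2 * n) = St (iter r target pos0) (fun _ => None).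
Proof.
elim: r => [|r IH] //=.
have -> : (r.+1).*2 * n = r.*2 * n + n + n by lia.
rewrite exec_addn -mulSnr round_robin_cycle mulSnr exec_addn round_robin_cycle IH.
have in_enum (j : 'I_n) : j \in enum 'I_n by rewrite mem_enum.
rewrite (@foldl_step_look (St _ (fun=> None))) ?enum_uniq //=.
rewrite (foldl_step_move (q := target (iter r target pos0))) ?enum_uniq // => [|j _].
  by congr St; apply: functional_extensionality => j; rewrite in_enum.
by rewrite /= in_enum.
Qed.

End RoundRobin.

Section MirroredFrames.
Variables (n : nat) (algo : algorithm) (M : seq node) (g : gaut).
Variables (s : 'I_n -> 'I_n) (frame : 'I_n -> orient).
Hypothesis s_inv : involutive s.
Hypothesis symM : sym_M M g.
Hypothesis frame_mirror : forall i u, lin (frame (s i)) u = lin (g_lin g) (lin (frame i) u).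

Definition mirrored (P : 'I_n -> node) := forall i, P (s i) = gapp g (P i).

Lemma lam_mirrored P : mirrored P -> forall v, lam P (gapp g v) = lam P v.
Proof.
move=> mirP v; transitivity #|[set j | P j == gapp g v]|.
  by apply: eq_card => j; rewrite inE.
rewrite -(card_preimset _ (inv_inj s_inv)); apply: eq_card => j.
by rewrite !inE mirP (inj_eq (@gapp_inj g)).
Qed.

Lemma target_mirrored P : mirrored P -> mirrored (snapshot_target algo M frame P).
Proof.
move=> mirP i; rewrite /snapshot_target.
have seen u : nadd (P (s i)) (lin (frame (s i)) u) = gapp g (nadd (P i) (lin (frame i) u)).
  by rewrite frame_mirror mirP gapp_nadd.
rewrite seen; congr (gapp g (nadd _ (lin _ (dvec (algo _ _))))).
  by apply: functional_extensionality => v; rewrite seen lam_mirrored.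
by apply: functional_extensionality => v; rewrite seen symM.
Qed.

End MirroredFrames.

Lemma exists_mirror_pairing n M (pos : 'I_n -> node) g :
  injective pos -> involutive (gapp g) -> sym_conf M pos g ->
  (forall v, gapp g v = v -> lam pos v = 0%N) ->
  exists s, [/\ involutive s, forall i, s i != i & mirrored g s pos].
Proof.
move=> pos_inj ginv [_ symL] no_fixed.
have lam_pos i : (0 < lam pos (pos i))%N by apply/card_gt0P; exists i; rewrite inE.
have partner i : exists j, pos j = gapp g (pos i).
  by have := lam_pos i; rewrite -symL => /card_gt0P [j]; rewrite inE => /eqP; exists j.
have [s mir] := fin_all_exists partner.
exists s; split=> // [i|i]; first by apply: pos_inj; rewrite !mir ginv.
apply/eqP => si; have := lam_pos i.
by rewrite no_fixed // -mir si.
Qed.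

Lemma exists_mirrored_frames n (s : 'I_n -> 'I_n) (o : orient) :
  involutive s -> (forall i, s i != i) -> involutive (lin o) ->
  exists frame : 'I_n -> orient,
    forall i u, lin (frame (s i)) u = lin o (lin (frame i) u).
Proof.
move=> s_inv s_free o_inv.
exists (fun i : 'I_n => if (i < s i)%N then (false, false, false) else o) => i [a b].
rewrite s_inv; case: ltngtP => [||/val_inj si]; rewrite ?o_inv //.
by have := s_free i; rewrite si eqxx.
Qed.

Lemma gathering_node_fixed n M (pos0 : 'I_n -> node) algo g :
  (0 < n)%N -> injective pos0 -> involutive (gapp g) -> sym_conf M pos0 g ->
  (forall v, gapp g v = v -> lam pos0 v = 0%N) ->
  solves_gathering algo M pos0 -> exists w, weber M pos0 w /\ gapp g w = w.
Proof.
move=> n_gt0 pos_inj ginv symC no_fixed gathers.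
have [s [s_inv s_free mir0]] := exists_mirror_pairing pos_inj ginv symC no_fixed.
have [frame frame_mirror] := exists_mirrored_frames s_inv s_free (lin_involutive ginv).
have [w [weber_w [T gathered]]] := gathers frame _ (round_robin_fair n_gt0).
exists w; split=> //.
have mirT : mirrored g s (iter T (snapshot_target algo M frame) pos0).
  elim: T {gathered} => [|r IH] //=.
  by apply: target_mirrored => //; case: symC.
have le_T : (T <= T.*2 * n)%N by rewrite -addnn mulnDl; nia.
have := gathered _ le_T; rewrite exec_round_robin /= => at_w.
by rewrite -{2}(at_w (s (Ordinal n_gt0))) mirT at_w.
Qed.

Theorem lemma2 (n : nat) (M : seq node) (pos0 : 'I_n -> node) :
  (0 < n)%N -> injective pos0 ->
  class_I3b3 M pos0 \/ class_I4b3 M pos0 ->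
  forall algo : algorithm, ~ solves_gathering algo M pos0.
Proof.
move=> n_gt0 pos_inj [[f [[_ finv] [_ [_ [_ [symC fixed]]]]]] | [f [rot _ _ symC fixed]]];
  move=> algo gathers.
- have [w [weber_w fw]] := gathering_node_fixed n_gt0 pos_inj finv symC
    (fun v e => (fixed v e).2) gathers.
  by have := (fixed w fw).1; rewrite weber_w.
- have [g [k [ginv gfk gfix]]] := rotation_half_turn rot.
  have [w [/andP [wM _] gw]] := gathering_node_fixed n_gt0 pos_inj ginv
    (sym_conf_iter gfk symC) (fun v e => (fixed v (gfix v e)).2) gathers.
  by have := (fixed w (gfix w gw)).1; rewrite wM.
Qed.
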